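(* Let $\nu$ be a modulus of variation and $1\le p<\infty$. If $f\in V_p[\nu]$ is $2\pi$-periodic, then there is a constant $C$ (depending on $f$) such that its Fourier coefficients satisfy $|\hat f(n)|\le C\,\nu(n)/n^{1/p}$ for all $n\ge1$.
   Context: A modulus of variation is a nondecreasing concave sequence of positive numbers $\nu(1),\nu(2),\dots$. For $f$ and $n\ge1$, $\upsilon_p(n,f)=\sup(\sum_{j=1}^n|f(I_j)|^p)^{1/p}$ over $n$ nonoverlapping subintervals $I_j$ of $[0,2\pi]$, $f(I)=f(\sup I)-f(\inf I)$; $V_p[\nu]$ is the class of bounded $2\pi$-periodic $f$ with $\upsilon_p(n,f)\le C\nu(n)$ for all $n$ and some $C$. *)

From HB Require Import structures.
From mathcomp Require Import all_boot all_order all_algebra.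
From mathcomp Require Import all_classical all_reals all_analysis.
Set Implicit Arguments. Unset Strict Implicit. Unset Printing Implicit Defensive.
Import Order.TTheory GRing.Theory Num.Theory.
Local Open Scope classical_set_scope.
Local Open Scope ring_scope.

(* A complex-valued function f = u + i v : R -> C is represented by its real
   and imaginary parts u v : R -> R. *)

Definition modulus_of_variation (R : realType) (nu : nat -> R) : Prop :=
  (forall n, (1 <= n)%N -> 0 < nu n) /\
  (forall n, (1 <= n)%N -> nu n <= nu n.+1) /\
  (forall n, (1 <= n)%N -> nu n.+2 - nu n.+1 <= nu n.+1 - nu n).

Definition incr_abs (R : realType) (u v : R -> R) (a b : R) : R :=
  Num.sqrt ((u b - u a) ^+ 2 + (v b - v a) ^+ 2).

Definition nonoverlapping (R : realType) (n : nat) (a b : 'I_n -> R) : Prop :=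
  (forall j, 0 <= a j /\ a j <= b j /\ b j <= 2 * pi) /\
  (forall i j, i != j -> b i <= a j \/ b j <= a i).

Definition upsilon (R : realType) (p : R) (n : nat) (u v : R -> R) : \bar R :=
  ereal_sup [set r : \bar R | exists (a b : 'I_n -> R), nonoverlapping a b /\
     r = ((\sum_(j < n) (incr_abs u v (a j) (b j)) `^ p) `^ p^-1)%:E].

Definition periodic2pi (R : realType) (g : R -> R) : Prop :=
  forall x, g (x + 2 * pi) = g x.

Definition Vp (R : realType) (p : R) (nu : nat -> R) (u v : R -> R) : Prop :=
  periodic2pi u /\ periodic2pi v /\
  (exists M : R, forall x, `|u x| <= M /\ `|v x| <= M) /\
  (exists C : R, forall n, (1 <= n)%N -> (upsilon p n u v <= (C * nu n)%:E)%E).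

(* Fourier coefficient  hat f(n) = (1/2pi) int_0^{2pi} f(x) e^{-inx} dx,
   real and imaginary parts. *)
Definition fourier_re (R : realType) (u v : R -> R) (n : nat) : R :=
  (2 * pi)^-1 * Rintegral lebesgue_measure `[0, 2 * pi]
    (fun x => u x * cos (n%:R * x) + v x * sin (n%:R * x)).
Definition fourier_im (R : realType) (u v : R -> R) (n : nat) : R :=
  (2 * pi)^-1 * Rintegral lebesgue_measure `[0, 2 * pi]
    (fun x => v x * cos (n%:R * x) - u x * sin (n%:R * x)).
Definition fourier_abs (R : realType) (u v : R -> R) (n : nat) : R :=
  Num.sqrt (fourier_re u v n ^+ 2 + fourier_im u v n ^+ 2).

(* Fix n >= 1 and a unit vector (al, be) = (cos th, sin th).  Then
   al Re f^(n) + be Im f^(n) is the mean over [0, 2 pi] of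
   u cos (n x + th) + v sin (n x + th).  Cut [0, 2 pi] into 2n intervals of
   length pi/n and fold them onto [0, pi/n]: the phase changes sign from one
   interval to the next, so by Cauchy-Schwarz each pair of consecutive values
   is at most an increment |f(I_k)|, where the n intervals I_k do not overlap.
   Hoelder bounds the sum of these increments by n^(1 - 1/p) upsilon_p(n, f)
   <= C n^(1 - 1/p) nu(n).  Integrating over [0, pi/n] and taking the supremum
   over th gives |f^(n)| <= C nu(n) / (2 n^(1/p)). *)

From HB Require Import structures.
From mathcomp Require Import all_boot all_order all_algebra.
From mathcomp Require Import all_classical all_reals all_analysis.
From mathcomp Require Import measurable_realfun ring lra zify.
Set Implicit Arguments. Unset Strict Implicit. Unset Printing Implicit Defensive.
Import Order.TTheory GRing.Theory Num.Theory.
Import numFieldNormedType.Exports.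
Local Open Scope classical_set_scope.
Local Open Scope ring_scope.

Section lebesgue_itv.
Context {R : realType}.
Notation mu := (@lebesgue_measure R).
Implicit Types (G : R -> R) (a b c h K : R).

Lemma lebesgue_measure_cc a b : a <= b -> mu `[a, b] = (b - a)%:E.
Proof.
move=> ab; have := lebesgue_measure_itv `[a, b]; rewrite /= lte_fin => ->.
by case: ltgtP ab => // ->; rewrite subrr.
Qed.

Lemma measurable_addr c : measurable_fun [set: measurableTypeR R]
  (fun x : measurableTypeR R => (x + c : measurableTypeR R)).
Proof.
by apply: continuous_measurable_fun => x; apply: continuousD => //; exact: cvg_cst.
Qed.

Lemma bounded_integrable_itv G K a b : measurable_fun `[a, b] G ->
  (forall x, `|G x| <= K) -> mu.-integrable `[a, b] (EFin \o G).
Proof.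
move=> mG GK; apply: measurable_bounded_integrable => //.
  exact/compact_finite_measure/segment_compact.
exists K; split; first exact: num_real.
by move=> M KM x _; exact: le_trans (GK x) (ltW KM).
Qed.

Lemma Rintegral_itv_lincomb G1 G2 K a b c1 c2 :
  measurable_fun `[a, b] G1 -> measurable_fun `[a, b] G2 ->
  (forall x, `|G1 x| <= K) -> (forall x, `|G2 x| <= K) ->
  c1 * \int[mu]_(x in `[a, b]) G1 x + c2 * \int[mu]_(x in `[a, b]) G2 x =
  \int[mu]_(x in `[a, b]) (c1 * G1 x + c2 * G2 x).
Proof.
move=> mG1 mG2 G1K G2K.
have iG1 := bounded_integrable_itv mG1 G1K; have iG2 := bounded_integrable_itv mG2 G2K.
by rewrite RintegralD ?RintegralZl//; [exact: integrableZl iG1|exact: integrableZl iG2].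
Qed.

Let mu_addr c := measure_function_pushforward__canonical__measure_function_Measure
  mu (measurable_addr c).

Lemma mu_addrE c A : measurable A -> mu_addr c A = mu A.
Proof.
move=> mA; apply/esym; move: A mA; apply: lebesgue_measure_unique.
move=> _ [[a b] _ <-] /=; rewrite /pushforward.
have -> : (fun x => x + c) @^-1` `]a, b] = `]a - c, b - c]%classic.
  by apply/seteqP; split => x /=; rewrite !in_itv/= lerBrDr ltrBlDr.
have := lebesgue_measure_itv `]a, b]; have := lebesgue_measure_itv `]a - c, b - c].
rewrite /= !lte_fin ltrD2r => -> ->; case: ifPn => // _.
by congr (_%:E); rewrite opprB addrA subrK.
Qed.

Lemma preimage_addr_cc a b c :
  (fun x => x + c) @^-1` `[a + c, b + c] = `[a, b]%classic.
Proof. by apply/seteqP; split => x /=; rewrite !in_itv/= !lerD2r. Qed.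

Lemma Rintegral_itv_addr G K a b c : measurable_fun [set: R] G ->
  (forall x, `|G x| <= K) ->
  \int[mu]_(x in `[a + c, b + c]) G x = \int[mu]_(t in `[a, b]) G (t + c).
Proof.
move=> mG GK; rewrite /Rintegral; congr fine.
have mGc : measurable_fun [set: R] (fun t => G (t + c)).
  exact: measurableT_comp (measurable_addr c).
have intGc : mu.-integrable ((fun x : R => x + c) @^-1` `[a + c, b + c])
    ((EFin \o G) \o (fun x : R => x + c)).
  by rewrite preimage_addr_cc; exact: bounded_integrable_itv (measurable_funTS mGc) _.
have := @integral_pushforward _ _ _ _ R _ (measurable_addr c) mu _ _
  ((measurable_EFinP _ _).2 mG) intGc (measurable_itv `[a + c, b + c]).
rewrite preimage_addr_cc => <-.
apply/esym; apply: (@eq_measure_integral _ _ _ _ mu (mu_addr c)).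
by move=> A mA _; exact: mu_addrE.
Qed.

Lemma Rintegral_itv_split G K a b c : measurable_fun [set: R] G ->
  (forall x, `|G x| <= K) -> a <= c -> c <= b ->
  \int[mu]_(x in `[a, b]) G x =
  \int[mu]_(x in `[a, c]) G x + \int[mu]_(x in `[c, b]) G x.
Proof.
move=> mG GK ac cb.
have := @Rintegral_itvB R G (BLeft a) (BRight b) c
  (bounded_integrable_itv (measurable_funTS mG) GK).
rewrite !bnd_simp => /(_ ac cb) ab_ac.
rewrite -(@Rintegral_itv_obnd_cbnd R c (BRight b)); first by rewrite -ab_ac addrC subrK.
apply: integrableS (bounded_integrable_itv (measurable_funTS mG) GK) => //.
exact: subset_itv_oc_cc.
Qed.

Lemma integrable_itv_sum_addr G K a b h m : measurable_fun [set: R] G ->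
  (forall x, `|G x| <= K) ->
  mu.-integrable `[a, b] (EFin \o fun t => \sum_(j < m) G (t + j%:R * h)).
Proof.
move=> mG GK; apply: (bounded_integrable_itv (K := m%:R * K)).
  apply/measurable_funTS/measurable_sum => j.
  exact: measurableT_comp (measurable_addr _).
move=> t; apply: (le_trans (ler_norm_sum _ _ _)).
have -> : m%:R * K = \sum_(j < m) K by rewrite sumr_const card_ord mulr_natl.
exact: ler_sum.
Qed.

Lemma Rintegral_itv_fold G K h m : measurable_fun [set: R] G ->
  (forall x, `|G x| <= K) -> 0 <= h ->
  \int[mu]_(x in `[0, m%:R * h]) G x =
  \int[mu]_(t in `[0, h]) \sum_(j < m) G (t + j%:R * h).
Proof.
move=> mG GK h0; elim: m => [|m IH].
  rewrite mul0r set_itv1 Rintegral_set1.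
  by under eq_Rintegral do rewrite big_ord0; rewrite Rintegral_cst// mul0r.
rewrite (Rintegral_itv_split (c := m%:R * h) mG GK) ?mulr_ge0 ?ler_wpM2r ?ler_nat//.
rewrite IH -natr1 mulrDl mul1r -[in X in `[X, _]](add0r (m%:R * h)) [_ + h]addrC.
rewrite (Rintegral_itv_addr _ _ _ mG GK) -RintegralD//; last 2 first.
- exact: integrable_itv_sum_addr mG GK.
- apply: bounded_integrable_itv (fun t => GK _); apply: measurable_funTS.
  exact: measurableT_comp (measurable_addr _).
by apply: eq_Rintegral => t _; rewrite big_ord_recr.
Qed.

Lemma Rintegral_itv_fold_le G K h m c : measurable_fun [set: R] G ->
  (forall x, `|G x| <= K) -> 0 <= h ->
  (forall t, 0 <= t <= h -> \sum_(j < m) G (t + j%:R * h) <= c) ->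
  \int[mu]_(x in `[0, m%:R * h]) G x <= c * h.
Proof.
move=> mG GK h0 Gc; rewrite (Rintegral_itv_fold _ mG GK h0).
have -> : c * h = \int[mu]_(t in `[0, h]) c.
  rewrite Rintegral_cst//; set m0h := (X in fine X).
  by have -> : m0h = _ := lebesgue_measure_cc h0; rewrite subr0.
apply: le_Rintegral => //.
- exact: integrable_itv_sum_addr mG GK.
- by apply: (bounded_integrable_itv (K := `|c|)) => //; exact: measurable_cst.
Qed.
End lebesgue_itv.

Section inequalities.
Context {R : realType}.

Lemma hoelder_sum1 n (x : 'I_n -> R) p : (0 < n)%N -> 1 <= p ->
  (forall k, 0 <= x k) -> \sum_k x k `^ p <= 1 ->
  \sum_k x k <= n%:R `^ (1 - p^-1).
Proof.
move=> n_gt0 p_ge1 x_ge0 sum_le1.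
have n0 : 0 < n%:R :> R by rewrite ltr0n.
have [p1|p_neq1] := eqVneq p 1.
  move: sum_le1; rewrite p1 invr1 subrr powRr0.
  by under eq_bigr do rewrite powRr1 ?x_ge0//.
have p_gt1 : 1 < p by rewrite lt_neqAle eq_sym p_neq1.
have p_gt0 : 0 < p := lt_trans ltr01 p_gt1.
set r := 1 - p^-1; have r_gt0 : 0 < r by rewrite subr_gt0 invf_lt1.
set c := (n%:R `^ r)^-1; have c_ge0 : 0 <= c by rewrite invr_ge0 powR_ge0.
have c_conj : c `^ r^-1 = n%:R^-1.
  by rewrite /c -powRN -powRrM mulNr mulfV ?gt_eqF// powR_inv1// ltW.
(* Young's inequality with the conjugate exponents p and r^-1 *)
have young k : x k * c <= x k `^ p / p + n%:R^-1 / r^-1.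
  rewrite -c_conj; apply: conjugate_powR; rewrite ?invr_gt0 ?invrK//.
  by rewrite /r addrC subrK.
rewrite -[leRHS]mul1r -ler_pdivrMr ?powR_gt0// mulr_suml.
apply: le_trans (ler_sum _ (fun k _ => young k)) _.
rewrite big_split/= -mulr_suml sumr_const card_ord invrK -mulrnAl -mulr_natr.
rewrite mulVf ?gt_eqF// mul1r -lerBrDr /r subKr -[leRHS]mul1r.
by rewrite ler_wpM2r// invr_ge0 ltW.
Qed.

Lemma hoelder_sum n (x : 'I_n -> R) p B : (0 < n)%N -> 1 <= p -> 0 < B ->
  (forall k, 0 <= x k) -> (\sum_k x k `^ p) `^ p^-1 <= B ->
  \sum_k x k <= B * n%:R `^ (1 - p^-1).
Proof.
move=> n_gt0 p_ge1 B_gt0 x_ge0 normB.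
have p_gt0 : 0 < p := lt_le_trans ltr01 p_ge1.
set S := \sum_k x k `^ p.
have S_ge0 : 0 <= S by rewrite sumr_ge0// => k _; exact: powR_ge0.
have S_le : S <= B `^ p.
  rewrite -[leLHS]powRr1// -[1](mulVf (lt0r_neq0 p_gt0)) powRrM.
  by apply: ge0_ler_powR; rewrite ?nnegrE ?powR_ge0 ?(ltW p_gt0) ?(ltW B_gt0).
rewrite mulrC -ler_pdivrMr// mulr_suml; apply: hoelder_sum1 => // [k|].
  by rewrite divr_ge0 ?x_ge0 ?ltW.
under eq_bigr do rewrite powRM ?x_ge0 ?invr_ge0 ?(ltW B_gt0)//.
rewrite -mulr_suml -/S -powR_inv1 ?(ltW B_gt0)// -powRrM mulN1r powRN.
by rewrite ler_pdivrMr ?powR_gt0// mul1r.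
Qed.

Lemma norm_le1_of_sqr_sum1 (c s : R) : c ^+ 2 + s ^+ 2 = 1 -> `|c| <= 1.
Proof.
move=> cs1; rewrite -(expr_le1 (_ : 0 < 2)%N)// -normrX ger0_norm ?sqr_ge0//.
by rewrite -cs1 lerDl sqr_ge0.
Qed.

Lemma norm_dot2_le (x y c s K : R) : `|x| <= K -> `|y| <= K ->
  `|c| <= 1 -> `|s| <= 1 -> `|x * c + y * s| <= K + K.
Proof.
move=> xK yK c1 s1; apply: le_trans (ler_normD _ _) _.
by rewrite !normrM; apply: lerD; rewrite -[K]mulr1 ler_pM.
Qed.

Lemma dot2_le_sqrt (X Y c s : R) : c ^+ 2 + s ^+ 2 = 1 ->
  X * c + Y * s <= Num.sqrt (X ^+ 2 + Y ^+ 2).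
Proof.
move=> cs1; apply: le_trans (ler_norm _) _.
rewrite -sqrtr_sqr ler_sqrt ?addr_ge0 ?sqr_ge0// -subr_ge0.
(* Lagrange's identity *)
have -> : X ^+ 2 + Y ^+ 2 - (X * c + Y * s) ^+ 2 = (X * s - Y * c) ^+ 2.
  by rewrite -[X ^+ 2 + _]mulr1 -cs1; ring.
exact: sqr_ge0.
Qed.

Lemma sqrt_sqr_le_dot2 (x y K : R) :
  (forall c s, c ^+ 2 + s ^+ 2 = 1 -> c * x + s * y <= K) ->
  Num.sqrt (x ^+ 2 + y ^+ 2) <= K.
Proof.
move=> dotK; set S := Num.sqrt _.
have [S0|S_neq0] := eqVneq S 0.
  have := dotK 1 0; have := dotK (-1) 0.
  by rewrite S0 expr0n sqrrN expr1n addr0 => /(_ erefl) + /(_ erefl); lra.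
have S_gt0 : 0 < S by rewrite lt0r S_neq0 sqrtr_ge0.
have S2 : S ^+ 2 = x ^+ 2 + y ^+ 2 by rewrite sqr_sqrtr// addr_ge0// sqr_ge0.
apply: le_trans _ (dotK (x / S) (y / S) _).
  have -> : x / S * x + y / S * y = S ^+ 2 / S by rewrite S2; field.
  by rewrite expr2 mulfK.
by rewrite !expr_div_n -mulrDl -S2 mulfV ?expf_neq0.
Qed.
End inequalities.

Section variation.
Context {R : realType}.

Lemma sumr_pairs (f : nat -> R) n :
  \sum_(j < 2 * n) f j = \sum_(k < n) (f (2 * k)%N + f (2 * k).+1).
Proof.
elim: n => [|n IH]; first by rewrite muln0 !big_ord0.
by rewrite mulnS !big_ord_recr/= -IH addrA.
Qed.

Lemma nonoverlapping_pairs n (t : R) : (0 < n)%N -> 0 <= t <= pi / n%:R ->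
  nonoverlapping (fun k : 'I_n => t + (2 * k)%:R * (pi / n%:R))
                 (fun k => t + (2 * k).+1%:R * (pi / n%:R)).
Proof.
move=> n_gt0 /andP[t_ge0 t_le]; set h := pi / n%:R.
have h_ge0 : 0 <= h by rewrite divr_ge0 ?pi_ge0.
have mono i j : (i <= j)%N -> t + i%:R * h <= t + j%:R * h.
  by move=> ij; rewrite lerD2l ler_wpM2r// ler_nat.
split=> [k|i j ij].
  split; first by rewrite addr_ge0// mulr_ge0.
  split; first exact: mono.
  have two_pi : 2 * pi = ((2 * n).-1%:R + 1) * h.
    rewrite natr1 prednK ?muln_gt0// natrM -mulrA [n%:R * h]mulrC divfK//.
    by rewrite pnatr_eq0 -lt0n.
  apply: le_trans (mono _ (2 * n).-1 _) _; first by have := ltn_ord k; lia.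
  by rewrite two_pi mulrDl mul1r [leRHS]addrC lerD2r.
move: ij; rewrite -val_eqE neq_ltn => /orP[lt_ij|lt_ji].
- by left; apply: mono; rewrite ltn_pmul2l.
- by right; apply: mono; rewrite ltn_pmul2l.
Qed.

Lemma upsilon_sum_le p n (u v : R -> R) K (a b : 'I_n -> R) :
  (upsilon p n u v <= K%:E)%E -> nonoverlapping a b ->
  (\sum_(j < n) incr_abs u v (a j) (b j) `^ p) `^ p^-1 <= K.
Proof.
move=> upsK ab; rewrite -lee_fin; apply: le_trans upsK.
by apply: ereal_sup_ubound; exists a, b.
Qed.
End variation.

Section phase.
Context {R : realType}.

Lemma measurable_cos_scale (k : R) : measurable_fun [set: R] (fun x => cos (k * x)).
Proof.
apply: measurableT_comp (continuous_measurable_fun (@continuous_cos R)) _.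
exact: measurable_funM.
Qed.

Lemma measurable_sin_scale (k : R) : measurable_fun [set: R] (fun x => sin (k * x)).
Proof.
apply: measurableT_comp (continuous_measurable_fun (@continuous_sin R)) _.
exact: measurable_funM.
Qed.

Variables (n : nat) (al be : R).

(* With (al, be) = (cos th, sin th), these are cos (n x + th) and sin (n x + th). *)
Definition phase_cos (x : R) := al * cos (n%:R * x) - be * sin (n%:R * x).
Definition phase_sin (x : R) := al * sin (n%:R * x) + be * cos (n%:R * x).

Lemma measurable_phase_cos : measurable_fun [set: R] phase_cos.
Proof.
apply: measurable_funB; apply: measurable_funM => //.
  exact: measurable_cos_scale.
exact: measurable_sin_scale.
Qed.

Lemma measurable_phase_sin : measurable_fun [set: R] phase_sin.
Proof.
apply: measurable_funD; apply: measurable_funM => //.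
  exact: measurable_sin_scale.
exact: measurable_cos_scale.
Qed.

Hypothesis n_gt0 : (0 < n)%N.

Let nDpi (x : R) : n%:R * (x + pi / n%:R) = n%:R * x + pi.
Proof. by rewrite mulrDr [n%:R * (pi / _)]mulrC divfK// pnatr_eq0 -lt0n. Qed.

Lemma phase_cosDpi x : phase_cos (x + pi / n%:R) = - phase_cos x.
Proof. by rewrite /phase_cos nDpi cosDpi sinDpi; ring. Qed.

Lemma phase_sinDpi x : phase_sin (x + pi / n%:R) = - phase_sin x.
Proof. by rewrite /phase_sin nDpi cosDpi sinDpi; ring. Qed.

Hypothesis unit_dir : al ^+ 2 + be ^+ 2 = 1.

Lemma phase_sqr x : phase_cos x ^+ 2 + phase_sin x ^+ 2 = 1.
Proof.
have -> : phase_cos x ^+ 2 + phase_sin x ^+ 2 =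
    (al ^+ 2 + be ^+ 2) * (cos (n%:R * x) ^+ 2 + sin (n%:R * x) ^+ 2).
  by rewrite /phase_cos /phase_sin; ring.
by rewrite unit_dir cos2Dsin2 mulr1.
Qed.

Lemma phase_pair_le (u v : R -> R) a b : b = a + pi / n%:R ->
  (u a * phase_cos a + v a * phase_sin a) + (u b * phase_cos b + v b * phase_sin b)
  <= incr_abs u v a b.
Proof.
move=> {b}->; rewrite phase_cosDpi phase_sinDpi /incr_abs.
rewrite -(opprB (u a)) -(opprB (v a)) !sqrrN.
set a' := a + _; have -> : u a * phase_cos a + v a * phase_sin a
    + (u a' * - phase_cos a + v a' * - phase_sin a)
    = (u a - u a') * phase_cos a + (v a - v a') * phase_sin a by ring.
exact: dot2_le_sqrt (phase_sqr a).
Qed.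
End phase.

Section fourier_phase.
Context {R : realType}.
Notation mu := (@lebesgue_measure R).
Variables (u v : R -> R) (M : R) (n : nat) (al be : R).
Hypotheses (mfu : measurable_fun `[0, 2 * pi] u) (mfv : measurable_fun `[0, 2 * pi] v).
Hypothesis uvM : forall x, `|u x| <= M /\ `|v x| <= M.
Hypothesis n_gt0 : (0 < n)%N.
Hypothesis unit_dir : al ^+ 2 + be ^+ 2 = 1.

Let D : set R := `[0, 2 * pi].

(* u and v are only measurable on [0, 2 pi]; the patches are measurable on R *)
Definition phase_integrand x :=
  (u \_ D) x * phase_cos n al be x + (v \_ D) x * phase_sin n al be x.

Lemma measurable_phase_integrand : measurable_fun [set: R] phase_integrand.
Proof.
have mD : measurable D by exact: measurable_itv.
apply: measurable_funD; apply: measurable_funM.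
- exact: (measurable_restrictT _ mD).1 mfu.
- exact: measurable_phase_cos.
- exact: (measurable_restrictT _ mD).1 mfv.
- exact: measurable_phase_sin.
Qed.

Lemma norm_phase_integrand_le x : `|phase_integrand x| <= M + M.
Proof.
have M_ge0 : 0 <= M := le_trans (normr_ge0 _) (uvM 0).1.
have patch_le (f : R -> R) : (forall y, `|f y| <= M) -> `|(f \_ D) x| <= M.
  by move=> fM; rewrite patchE; case: ifP; rewrite ?normr0.
apply: norm_dot2_le; [exact: patch_le (fun y => (uvM y).1)
  | exact: patch_le (fun y => (uvM y).2)
  | exact: norm_le1_of_sqr_sum1 (phase_sqr _ unit_dir x) | ].
by apply: (@norm_le1_of_sqr_sum1 _ _ (phase_cos n al be x)); rewrite addrC phase_sqr.
Qed.

Lemma fourier_phaseE : al * fourier_re u v n + be * fourier_im u v n =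
  (2 * pi)^-1 * \int[mu]_(x in D) phase_integrand x.
Proof.
rewrite /fourier_re /fourier_im mulrCA [be * _]mulrCA -mulrDr.
rewrite (Rintegral_itv_lincomb (K := M + M)); first last.
- move=> x; have [uM vM] := uvM x; rewrite -mulrN.
  by apply: norm_dot2_le; rewrite ?normrN ?cos_max ?sin_max.
- move=> x; have [uM vM] := uvM x.
  by apply: norm_dot2_le; rewrite ?cos_max ?sin_max.
- apply: measurable_funB; apply: measurable_funM => //; apply: measurable_funTS.
    exact: measurable_cos_scale.
  exact: measurable_sin_scale.
- apply: measurable_funD; apply: measurable_funM => //; apply: measurable_funTS.
    exact: measurable_cos_scale.
  exact: measurable_sin_scale.
congr (_ * _); apply: eq_Rintegral => x Dx.
by rewrite /phase_integrand !patchT// /phase_cos /phase_sin; ring.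
Qed.

Lemma phase_integrand_sum_le p B t : 1 <= p -> 0 < B ->
  (forall a b : 'I_n -> R, nonoverlapping a b ->
     (\sum_j incr_abs u v (a j) (b j) `^ p) `^ p^-1 <= B) ->
  0 <= t <= pi / n%:R ->
  \sum_(j < 2 * n) phase_integrand (t + j%:R * (pi / n%:R)) <= B * n%:R `^ (1 - p^-1).
Proof.
move=> p_ge1 B_gt0 varB t_bnd; have ab := nonoverlapping_pairs n_gt0 t_bnd.
rewrite (sumr_pairs (fun j => phase_integrand (t + j%:R * (pi / n%:R)))).
apply: le_trans (hoelder_sum n_gt0 p_ge1 B_gt0 _ (varB _ _ ab)).
  apply: ler_sum => k _ /=; have [a_ge0 [a_le_b b_le]] := ab.1 k.
  have inD x : 0 <= x <= 2 * pi -> x \in D by rewrite inE.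
  rewrite /phase_integrand !patchT ?inD ?a_ge0 ?(le_trans a_ge0 a_le_b)
    ?(le_trans a_le_b b_le)//.
  apply: phase_pair_le => //; set h := pi / n%:R.
  by rewrite -natr1 mulrDl mul1r addrA.
by move=> k; exact: sqrtr_ge0.
Qed.

Lemma fourier_phase_le p B : 1 <= p -> 0 < B ->
  (forall a b : 'I_n -> R, nonoverlapping a b ->
     (\sum_j incr_abs u v (a j) (b j) `^ p) `^ p^-1 <= B) ->
  al * fourier_re u v n + be * fourier_im u v n <= B / n%:R `^ p^-1 / 2.
Proof.
move=> p_ge1 B_gt0 varB; pose h : R := pi / n%:R.
have h_ge0 : 0 <= h by rewrite divr_ge0 ?pi_ge0.
have n_neq0 : n%:R != 0 :> R by rewrite pnatr_eq0 -lt0n.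
have two_pi : 2 * pi = (2 * n)%:R * h by rewrite natrM -mulrA [n%:R * h]mulrC divfK.
rewrite fourier_phaseE /D [in X in \int[_]_(_ in X) _]two_pi.
apply: le_trans (ler_wpM2l _ (Rintegral_itv_fold_le measurable_phase_integrand
  norm_phase_integrand_le h_ge0 (fun t => phase_integrand_sum_le p_ge1 B_gt0 varB))) _.
  by rewrite invr_ge0 mulr_ge0 ?pi_ge0.
rewrite powRB ?powRr1 ?ler0n//; last by rewrite n_neq0 implybT.
have pi_neq0 : pi != 0 :> R by rewrite gt_eqF ?pi_gt0.
have y_neq0 : n%:R `^ p^-1 != 0 :> R by rewrite gt_eqF ?powR_gt0 ?ltr0n.
suff -> : (2 * pi)^-1 * (B * (n%:R / n%:R `^ p^-1) * h) = B / n%:R `^ p^-1 / 2 by [].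
by rewrite /h; move: (pi : R) pi_neq0 => P P_neq0; field; rewrite y_neq0 n_neq0.
Qed.

End fourier_phase.

Unset Implicit Arguments.
Set Strict Implicit.
Theorem proposition7p6 (R : realType) (nu : nat -> R) (p : R) (u v : R -> R) :
  modulus_of_variation nu -> 1 <= p ->
  measurable_fun `[0, 2 * pi] u -> measurable_fun `[0, 2 * pi] v ->
  Vp p nu u v ->
  exists C : R, forall n : nat, (1 <= n)%N ->
    fourier_abs u v n <= C * nu n / (n%:R `^ p^-1).
Proof.
move=> [nu_gt0 _] p_ge1 mfu mfv [_ [_ [[M uvM] [C varC]]]].
exists (`|C| + 1) => n n_gt0; set B := (`|C| + 1) * nu n.
have B_gt0 : 0 < B by rewrite mulr_gt0 ?nu_gt0// ltr_pwDr.
have varB a b : nonoverlapping a b ->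
    (\sum_(j < n) incr_abs u v (a j) (b j) `^ p) `^ p^-1 <= B.
  move=> ab; apply: le_trans (upsilon_sum_le (varC n n_gt0) ab) _.
  apply: ler_wpM2r; first exact/ltW/nu_gt0.
  by rewrite (le_trans (ler_norm C))// lerDl.
have := sqrt_sqr_le_dot2 (fun al be ab1 =>
  fourier_phase_le mfu mfv uvM n_gt0 ab1 p_ge1 B_gt0 varB).
have : 0 <= B / n%:R `^ p^-1 by rewrite divr_ge0 ?powR_ge0 ?ltW.
rewrite /fourier_abs; lra.
Qed.
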